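(* Let $M=p_1^{n_1}\cdots p_K^{n_K}$ with distinct primes and $n_\nu\in\mathbb{N}$, let $A\oplus B=\mathbb{Z}_M$, and fix $i$. Assume $0\in B$, and that there is $a_0\in A$ such that for every $a\in A\cap\Pi(a_0,p_i^{n_i-1})$ the fiber $a*F_i$ splits with parity $(B,A)$. Then for every $\nu\in\{1,\dots,p_i-1\}$, $$|A\cap\Pi(a_0,p_i^{n_i})|=|A\cap\Pi(a_0+\nu M/p_i,p_i^{n_i})|.$$ Consequently, $\Phi_{p_i^{n_i}}$ divides the mask polynomial of $A\cap\Pi(a_0,p_i^{n_i-1})$.
   Context: $A\oplus B=\mathbb{Z}_M$ means every element of $\mathbb{Z}_M$ is uniquely $a+b$ with $a\in A$, $b\in B$. The mask polynomial of $Y\subset\mathbb{Z}_M$ (viewed in $\{0,\dots,M-1\}$) is $Y(X)=\sum_{y\in Y}X^y$; $\Phi_s$ is the $s$-th cyclotomic polynomial. $\Pi(y,p_i^\alpha)=\{y'\in\mathbb{Z}_M:p_i^\alpha\mid y-y'\}$. $F_i=\{0,M/p_i,\dots,(p_i-1)M/p_i\}$, $x*F_i=\{x+f:f\in F_i\}$. For $Z\subset\mathbb{Z}_M$, $\Sigma_A(Z)=\{a\in A: a+b\in Z\text{ for some }b\in B\}$, $\Sigma_B(Z)=\{b\in B: a+b\in Z\text{ for some }a\in A\}$. A fiber $Z=x*F_i$ splits with parity $(B,A)$ if $p_i^{n_i}\mid b-b'$ for all $b,b'\in\Sigma_B(Z)$ and, for all distinct $a,a'\in\Sigma_A(Z)$,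 $p_i^{n_i-1}\mid a-a'$ but $p_i^{n_i}\nmid a-a'$. *)

From mathcomp Require Import all_boot all_order all_algebra all_field.
Set Implicit Arguments. Unset Strict Implicit. Unset Printing Implicit Defensive.
Import GRing.Theory.
Local Open Scope ring_scope.

(* Z_M is modelled by 'I_M (residues 0..M-1), addition is (x + y) %% M. *)

Definition tiling (M : nat) (A B : {set 'I_M}) : Prop :=
  forall x : 'I_M, exists! ab : 'I_M * 'I_M,
    [/\ ab.1 \in A, ab.2 \in B & ((ab.1 + ab.2) %% M)%N = x].

Definition Pi (M : nat) (y m : nat) : {set 'I_M} :=
  [set y' : 'I_M | y == y' %[mod m]].

Definition fiber (M p : nat) (x : 'I_M) : {set 'I_M} :=
  [set y : 'I_M | [exists k : 'I_p, (y : nat) == ((x + k * (M %/ p)) %% M)%N]].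

Definition SigmaA (M : nat) (A B Z : {set 'I_M}) : {set 'I_M} :=
  [set a in A | [exists b in B, [exists z in Z, (z : nat) == ((a + b) %% M)%N]]].

Definition SigmaB (M : nat) (A B Z : {set 'I_M}) : {set 'I_M} :=
  [set b in B | [exists a in A, [exists z in Z, (z : nat) == ((a + b) %% M)%N]]].

(* the fiber Z splits with parity (B, A), where n = n_i is the exponent of p in M *)
Definition splits_BA (M p n : nat) (A B Z : {set 'I_M}) : Prop :=
  (forall b b' : 'I_M, b \in SigmaB A B Z -> b' \in SigmaB A B Z ->
     (b = b' %[mod p ^ n])%N) /\
  (forall a a' : 'I_M, a \in SigmaA A B Z -> a' \in SigmaA A B Z -> a != a' ->
     (a = a' %[mod p ^ n.-1])%N /\ (a <> a' %[mod p ^ n])%N).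

Definition mask_poly (M : nat) (Y : {set 'I_M}) : {poly int} :=
  \sum_(y in Y) 'X^(nat_of_ord y).

From mathcomp Require Import all_boot all_order all_algebra all_field.
From mathcomp Require Import cyclic ring.
Set Implicit Arguments. Unset Strict Implicit. Unset Printing Implicit Defensive.
Import GRing.Theory.
Local Open Scope ring_scope.

(* Let n = logn p M, N = p ^ n and c(x) = #|A :&: Pi M x N|.  Sending a in A
   to the A-component of a + M/p is injective by uniqueness of the tiling
   decomposition; when a = a0 mod p ^ n.-1, the fiber a * F_i splits with
   parity (B, A) and contains both a + 0 and a + M/p, so the B-component is
   0 mod N and the image lands in Pi (x + M/p) N.  Hence t |-> c(a0 + t M/p)
   is nondecreasing; it is p-periodic since N | M, hence constant.  As
   M/p = u p ^ n.-1 with u prime to p, these shifts reach every residue mod N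
   congruent to a0 mod p ^ n.-1.  So, modulo X^N - 1, the mask polynomial of
   A :&: Pi a0 (p ^ n.-1) is c(a0) X^r (1 + X^(N/p) + ... + X^((p-1)N/p)),
   and the last factor is 'Phi_N. *)

Definition geomX (p m : nat) : {poly int} := \sum_(j < p) 'X^(j * m).

Lemma Xn_sub1_geomX (p m : nat) : 'X^(m * p) - 1 = ('X^m - 1) * geomX p m.
Proof.
rewrite exprM subrX1; congr (_ * _); apply: eq_bigr => j _.
by rewrite -exprM mulnC.
Qed.

Lemma Phi_prime_power (p k : nat) : prime p -> 'Phi_(p ^ k.+1) = geomX p (p ^ k).
Proof.
move=> p_pr; have p_gt0 := prime_gt0 p_pr.
have pk_gt0 : (0 < p ^ k)%N by rewrite expn_gt0 p_gt0.
have pk1_gt0 : (0 < p ^ k.+1)%N by rewrite expn_gt0 p_gt0.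
have Xpk_neq0 : ('X^(p ^ k) - 1 : {poly int}) != 0.
  by apply: monic_neq0; rewrite -[1]/(1%:P) monicXnsubC.
have divisors_pk1 : perm_eq (rem (p ^ k.+1)%N (divisors (p ^ k.+1))) (divisors (p ^ k)).
  apply: uniq_perm; [exact/rem_uniq/divisors_uniq | exact: divisors_uniq |].
  move=> d; rewrite mem_rem_uniq ?divisors_uniq // inE -!dvdn_divisors //.
  apply/andP/idP => [[d_neq /(dvdn_pfactor _ _ p_pr) [e e_le d_pe]] | d_dvd].
    rewrite d_pe in d_neq *; rewrite dvdn_Pexp2l ?prime_gt1 // -ltnS ltn_neqAle e_le andbT.
    by apply: contraNneq d_neq => ->.
  split; last by rewrite expnS dvdn_mull.
  by apply: contraTneq d_dvd => ->; rewrite dvdn_Pexp2l ?prime_gt1 // ltnn.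
apply: (mulIf Xpk_neq0).
have := prod_Cyclotomic pk1_gt0.
rewrite (big_rem (p ^ k.+1)%N) -?dvdn_divisors //= (perm_big _ divisors_pk1).
by rewrite prod_Cyclotomic // => ->; rewrite expnSr Xn_sub1_geomX mulrC.
Qed.

Lemma dvdp_Xn_sub1_XnB (N y z : nat) : (y = z %[mod N])%N ->
  ('X^N - 1 : {poly int}) %| 'X^y - 'X^z.
Proof.
wlog le_zy : y z / (z <= y)%N.
  move=> W yz; case: (leqP z y) => [|/ltnW] le; first exact: W.
  by rewrite -['X^y - _]opprB dvdpNr; apply: W.
move=> /eqP; rewrite eqn_mod_dvd // => /dvdnP [q yzE].
have -> : 'X^y = 'X^z * 'X^(q * N) :> {poly int} by rewrite -exprD -yzE subnKC.
rewrite -{2}['X^z]mulr1 -mulrBr mulnC exprM [in X in _ %| X]subrX1.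
by apply: dvdp_mull; apply: dvdp_mulIl.
Qed.

Lemma dvdp_sum (I : finType) (P : pred I) (F : I -> {poly int}) (d : {poly int}) :
  (forall i, P i -> d %| F i) -> d %| \sum_(i | P i) F i.
Proof. by move=> dF; apply: (big_ind (fun q => d %| q)); [exact: dvdp0 | exact: dvdp_add | ]. Qed.

Lemma sum_Xn_residue_class (m q r0 : nat) : (r0 < m)%N ->
  \sum_(0 <= r < q * m | (r %% m == r0)%N) 'X^r = 'X^r0 * geomX q m :> {poly int}.
Proof.
move=> r0_lt; elim: q => [|q IHq]; first by rewrite mul0n big_geq // /geomX big_ord0 mulr0.
rewrite (big_cat_nat _ (n := q * m)) //=; last by rewrite mulSn leq_addl.
rewrite IHq /geomX big_ord_recr /= mulrDr; congr (_ + _).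
rewrite -{1}[(q * m)%N]add0n big_addn mulSn addnK big_mkord.
rewrite (eq_bigl (pred1 (Ordinal r0_lt))) => [|i]; last first.
  by rewrite /= addnC modnMDl modn_small.
by rewrite big_pred1_eq -exprD addnC.
Qed.

Lemma Phi_prime_power_dvd_mask (M p k r0 c : nat) (S : {set 'I_M}) :
  prime p ->
  (forall y : 'I_M, y \in S -> y = r0 %[mod p ^ k])%N ->
  (forall r, r < p ^ k.+1 -> r = r0 %[mod p ^ k] ->
     #|[set y in S | y %% p ^ k.+1 == r]| = c)%N ->
  'Phi_(p ^ k.+1) %| mask_poly S.
Proof.
move=> p_pr S_mod S_card; rewrite Phi_prime_power // /mask_poly.
set m := (p ^ k)%N; set N := (p ^ k.+1)%N.
have N_gt0 : (0 < N)%N by rewrite expn_gt0 prime_gt0.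
have m_dvd_N : (m %| N)%N by rewrite /N expnS dvdn_mull.
have geom_dvd : geomX p m %| 'X^N - 1.
  by rewrite /N expnSr Xn_sub1_geomX dvdp_mulIr.
rewrite -(subrK (\sum_(y in S) 'X^(y %% N)%N) (\sum_(y in S) _)) -sumrB.
apply: dvdp_add.
  apply: dvdp_sum => y _; apply: (dvdp_trans geom_dvd).
  by apply: dvdp_Xn_sub1_XnB; rewrite modn_mod.
pose res (y : 'I_M) : 'I_N := Ordinal (ltn_pmod y N_gt0).
rewrite (partition_big res (fun r : 'I_N => (r %% m == r0 %% m)%N)); last first.
  by move=> y y_S; rewrite /= modn_dvdm //; apply/eqP/S_mod.
rewrite (eq_bigr (fun r : 'I_N => 'X^r *+ c)); last first.
  move=> r /eqP r_r0; rewrite -(S_card r) //.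
  rewrite -sumr_const; apply: eq_big => [y | y /andP [_ /eqP <-] //].
  by rewrite !inE.
rewrite sumrMnl -(big_mkord (fun r => (r %% m == r0 %% m)%N) (fun r => 'X^r)).
rewrite /N expnSr mulnC sum_Xn_residue_class ?ltn_mod ?expn_gt0 ?prime_gt0 //.
by rewrite -mulr_natl mulrA dvdp_mulIr.
Qed.

Local Close Scope ring_scope.

Lemma nondecreasing_periodic_const (f : nat -> nat) (p : nat) : 0 < p ->
  (forall t, f t <= f t.+1) -> (forall t, f (t + p) = f t) -> forall t, f t = f 0.
Proof.
move=> p_gt0 f_step f_per t.
have f_mono := homo_leq leqnn leq_trans f_step.
have f_tp : f (t * p) = f 0 by elim: t => // t IHt; rewrite mulSnr f_per.
by apply/eqP; rewrite eqn_leq -{1}f_tp !f_mono ?leq_pmulr.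
Qed.

Lemma residue_shift (m p u x y : nat) : 0 < p -> coprime u p -> y = x %[mod m] ->
  exists t, y = x + t * (u * m) %[mod m * p].
Proof.
move=> p_gt0 cop_up y_x.
have [e y_e] : exists e, y = x + e * m %[mod m * p].
  exists (y %/ m + x %/ m * p.-1).
  have -> : x + (y %/ m + x %/ m * p.-1) * m = y + x %/ m * (m * p).
    rewrite {1}(divn_eq x m) {2}(divn_eq y m) y_x.
    by case: p p_gt0 {cop_up} => // p' _ /=; ring.
  by rewrite addnC modnMDl.
have kuE : (u ^ (totient p).-1 * u = 1 %[mod p]).
  by rewrite -expnSr prednK ?totient_gt0 // Euler_exp_totient.
set k := u ^ (totient p).-1 in kuE *.
exists (e * k); rewrite y_e; apply/eqP; rewrite eqn_modDl; apply/eqP.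
rewrite -mulnA [k * _]mulnA [k * u * m]mulnC -[in RHS]modnMmr -muln_modr kuE.
by rewrite muln_modr muln1 modnMmr.
Qed.

Lemma eq_Pi (M x y N : nat) : x = y %[mod N] -> Pi M x N = Pi M y N.
Proof. by move=> xy; apply/setP => z; rewrite !inE xy. Qed.

Section Tiling.
Variables (M : nat) (A B : {set 'I_M}).

Definition Bpart_vanishes (N s : nat) (a : 'I_M) : Prop :=
  forall a' b : 'I_M, a' \in A -> b \in B -> a' + b = a + s %[mod M] -> b = 0 %[mod N].

Lemma splits_Bpart_vanishes (p n : nat) (a b0 : 'I_M) :
  1 < p -> b0 \in B -> b0 = 0 :> nat -> a \in A ->
  splits_BA p n A B (fiber p a) -> Bpart_vanishes (p ^ n) (M %/ p) a.
Proof.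
move=> p_gt1 b0B b0_0 aA [splitB _] a' b a'A bB a'b_as.
have p_gt0 : 0 < p by apply: ltnW.
have M_gt0 : 0 < M by apply: leq_ltn_trans (ltn_ord a).
have b_SigmaB : b \in SigmaB A B (fiber p a).
  rewrite inE bB; apply/existsP; exists a'; rewrite a'A /=.
  apply/existsP; exists (Ordinal (ltn_pmod (a + M %/ p) M_gt0)).
  rewrite inE /= a'b_as eqxx andbT; apply/existsP.
  by exists (Ordinal p_gt1); rewrite mul1n.
have b0_SigmaB : b0 \in SigmaB A B (fiber p a).
  rewrite inE b0B; apply/existsP; exists a; rewrite aA /=.
  apply/existsP; exists a; rewrite inE b0_0 addn0 modn_small // eqxx andbT.
  by apply/existsP; exists (Ordinal p_gt0); rewrite mul0n addn0 modn_small.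
by rewrite (splitB _ _ b_SigmaB b0_SigmaB) b0_0.
Qed.

Hypotheses (M_gt0 : 0 < M) (tilAB : tiling A B).

Lemma tiling_inj (a1 a2 b1 b2 : 'I_M) : a1 \in A -> a2 \in A -> b1 \in B -> b2 \in B ->
  a1 + b1 = a2 + b2 %[mod M] -> a1 = a2.
Proof.
move=> a1A a2A b1B b2B sum_eq.
have [ab [_ ab_uniq]] := tilAB (Ordinal (ltn_pmod (a1 + b1) M_gt0)).
have ab_1 := ab_uniq (a1, b1) (And3 a1A b1B erefl).
have ab_2 := ab_uniq (a2, b2) (And3 a2A b2B (esym sum_eq)).
by rewrite ab_1 in ab_2; case: ab_2.
Qed.

Lemma tiling_decomp (x : 'I_M) :
  exists ab : 'I_M * 'I_M, [&& ab.1 \in A, ab.2 \in B & (ab.1 + ab.2) %% M == x].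
Proof. by have [ab [[a_A b_B /eqP sum_x] _]] := tilAB x; exists ab; apply/and3P. Qed.

Definition Apart (w : nat) : 'I_M :=
  (xchoose (tiling_decomp (Ordinal (ltn_pmod w M_gt0)))).1.

Lemma ApartP (w : nat) :
  Apart w \in A /\ exists2 b : 'I_M, b \in B & Apart w + b = w %[mod M].
Proof.
have /and3P [aA bB /eqP sum_w] := xchooseP (tiling_decomp (Ordinal (ltn_pmod w M_gt0))).
by split=> //; eexists; [exact: bB | rewrite sum_w].
Qed.

Lemma Apart_shift_inj (s : nat) : {in A &, injective (fun a : 'I_M => Apart (a + s))}.
Proof.
move=> a1 a2 a1A a2A /= eq_part.
have [_ [b1 b1B sum1]] := ApartP (a1 + s).
have [_ [b2 b2B sum2]] := ApartP (a2 + s).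
have shift_sum (a a' : 'I_M) b b' :
    a' + b = a + s %[mod M] -> a + b' + s = a' + b + b' %[mod M].
  by move=> sum_ab; rewrite addnAC -modnDml -sum_ab modnDml.
apply: (tiling_inj a1A a2A b2B b1B); apply/eqP; rewrite -(eqn_modDr s); apply/eqP.
rewrite (shift_sum _ _ _ _ sum1) (shift_sum _ _ _ _ sum2) eq_part.
by rewrite -!addnA [b1 + b2]addnC.
Qed.

Lemma card_Pi_shift_le (N s x : nat) : N %| M ->
  (forall a : 'I_M, a \in A :&: Pi M x N -> Bpart_vanishes N s a) ->
  #|A :&: Pi M x N| <= #|A :&: Pi M (x + s) N|.
Proof.
move=> N_dvd_M vanish.
have inj_shift := sub_in2 (subsetP (subsetIl A (Pi M x N))) (Apart_shift_inj (s := s)).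
rewrite -(card_in_imset inj_shift).
apply/subset_leq_card/subsetP => _ /imsetP [a aPi ->].
have [a'A [b bB sum_b]] := ApartP (a + s).
have b_0 := vanish a aPi _ b a'A bB sum_b.
move: aPi; rewrite !inE a'A => /andP [_ /eqP x_a] /=.
have -> : Apart (a + s) %% N = (Apart (a + s) + b) %% N by rewrite -modnDmr b_0 mod0n addn0.
by rewrite -[(Apart _ + b) %% N](modn_dvdm _ N_dvd_M) sum_b modn_dvdm // -modnDml x_a modnDml.
Qed.

Lemma card_Pi_class_const (p k u x0 : nat) :
  prime p -> coprime p u -> M = u * p ^ k.+1 ->
  (forall a : 'I_M, a \in A -> a = x0 %[mod p ^ k] ->
     Bpart_vanishes (p ^ k.+1) (M %/ p) a) ->
  forall x, x = x0 %[mod p ^ k] ->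
  #|A :&: Pi M x (p ^ k.+1)| = #|A :&: Pi M x0 (p ^ k.+1)|.
Proof.
move=> p_pr cop_pu M_eq vanish x x_x0.
have p_gt0 := prime_gt0 p_pr.
have Mp_eq : M %/ p = u * p ^ k by rewrite M_eq expnSr mulnA mulnK.
have N_dvd_M : p ^ k.+1 %| M by rewrite M_eq dvdn_mull.
pose cnt t := #|A :&: Pi M (x0 + t * (M %/ p)) (p ^ k.+1)|.
have cnt_step t : cnt t <= cnt t.+1.
  rewrite /cnt mulSnr addnA; apply: card_Pi_shift_le => // a; rewrite !inE.
  case/andP=> aA /eqP a_mod; apply: vanish => //.
  rewrite -(modn_dvdm a (dvdn_exp2l p (leqnSn k))) -a_mod modn_dvdm ?dvdn_exp2l //.
  by rewrite Mp_eq mulnA addnC modnMDl.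
have cnt_periodic t : cnt (t + p) = cnt t.
  rewrite /cnt mulnDl addnA (mulnC p) divnK; last by rewrite M_eq expnS mulnCA dvdn_mulr.
  by rewrite (eq_Pi M (y := x0 + t * (M %/ p))) // -(modn_dvdm _ N_dvd_M) modnDr modn_dvdm.
have [t x_t] : exists t, x = x0 + t * (u * p ^ k) %[mod p ^ k * p].
  by apply: residue_shift; rewrite // coprime_sym.
rewrite (eq_Pi M (y := x0 + t * (M %/ p))); last by rewrite Mp_eq expnSr.
by have := nondecreasing_periodic_const p_gt0 cnt_step cnt_periodic t; rewrite /cnt mul0n addn0.
Qed.

End Tiling.

Theorem lemma4p8 (M p : nat) (A B : {set 'I_M}) (a0 : 'I_M) :
  prime p -> (p %| M)%N ->
  tiling A B ->
  [exists b in B, (b : nat) == 0%N] ->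
  a0 \in A ->
  (forall a : 'I_M, a \in A :&: Pi M a0 (p ^ (logn p M).-1) ->
     splits_BA p (logn p M) A B (fiber p a)) ->
  (forall nu : nat, (0 < nu < p)%N ->
     #|A :&: Pi M a0 (p ^ logn p M)| =
     #|A :&: Pi M (a0 + nu * (M %/ p)) (p ^ logn p M)|) /\
  ('Phi_(p ^ logn p M) %| mask_poly (A :&: Pi M a0 (p ^ (logn p M).-1)))%R.
Proof.
move=> p_pr p_dvd_M tilAB /existsP [b0 /andP [b0B /eqP b0_0]] a0A splitA.
have M_gt0 : 0 < M by apply: leq_ltn_trans (ltn_ord a0).
have [u cop_pu M_eq] := pfactor_coprime p_pr M_gt0.
have n_gt0 : 0 < logn p M by rewrite logn_gt0 mem_primes p_pr M_gt0 p_dvd_M.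
set k := (logn p M).-1 in splitA *; rewrite -(prednK n_gt0) -/k in M_eq splitA *.
have class_const x : x = a0 %[mod p ^ k] ->
    #|A :&: Pi M x (p ^ k.+1)| = #|A :&: Pi M a0 (p ^ k.+1)|.
  apply: (card_Pi_class_const M_gt0 tilAB p_pr cop_pu M_eq) => a aA a_a0.
  apply: (splits_Bpart_vanishes (prime_gt1 p_pr) b0B b0_0 aA); apply: splitA.
  by rewrite !inE aA a_a0 /=.
split=> [nu _ | ].
  have -> : M %/ p = u * p ^ k by rewrite M_eq expnSr mulnA mulnK ?prime_gt0.
  by rewrite class_const // mulnA addnC modnMDl.
apply: (Phi_prime_power_dvd_mask (r0 := a0) (c := #|A :&: Pi M a0 (p ^ k.+1)|)) => //.
  by move=> y; rewrite !inE => /andP [_ /eqP].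
move=> r r_lt r_a0; rewrite -(class_const r r_a0); apply: eq_card => y.
rewrite !inE -andbA (modn_small r_lt); congr (_ && _).
apply/andP/eqP => [[_ /eqP //] | r_y]; split; last exact/eqP.
by rewrite -r_a0 r_y modn_dvdm // expnS dvdn_mull.
Qed.
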